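(* For the single-choice constraint $\mathcal{F}=\{S\subseteq E:|S|\le1\}$, $\textsf{EoR}(\mathcal{F})=\textsf{PbM}(\mathcal{F})$.
   Context: Setting: $E$ is a finite ground set; each $e\in E$ has a nonnegative weight $w_e\sim D_e$, independently, $D=\times_e D_e$. Elements arrive one by one in a fixed order with their realized weights; an online algorithm (knowing $D$, possibly randomized) decides immediately and irrevocably upon each arrival whether to accept, keeping the accepted set in $\mathcal{F}$. $f(\boldsymbol{w})=\max_{S\in\mathcal{F}}\sum_{e\in S}w_e$ (here $=\max_e w_e$); $\boldsymbol{w}(\textsf{ALG}(\boldsymbol{w}))$ is the weight of the set selected by $\textsf{ALG}$. $\textsf{EoR}(\mathcal{F},D,\textsf{ALG})=\mathbf{E}[\boldsymbol{w}(\textsf{ALG}(\boldsymbol{w}))/f(\boldsymbol{w})]$, $\textsf{PbM}(\mathcal{F},D,\textsf{ALG})=\Pr[\boldsymbol{w}(\textsf{ALG}(\boldsymbol{w}))=f(\boldsymbol{w})]$; $\textsf{EoR}(\mathcal{F})=\inf_D\sup_{\textsf{ALG}}\textsf{EoR}(\mathcal{F},D,\textsf{ALG})$ and $\textsf{PbM}(\mathcal{F})=\inf_D\sup_{\textsf{ALG}}\textsf{PbM}(\mathcal{F},D,\textsf{ALG})$, the infima over product distributions. *)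

From HB Require Import structures.
From mathcomp Require Import all_boot all_order all_algebra.
From mathcomp Require Import all_classical all_reals all_analysis.
Set Implicit Arguments. Unset Strict Implicit. Unset Printing Implicit Defensive.
Import Order.TTheory GRing.Theory Num.Theory.
Local Open Scope classical_set_scope.
Local Open Scope ring_scope.

(* Ground set E = 'I_n, elements arrive in the order 0, 1, ..., n-1. *)

(* f(w) = max_e w_e  (weights are nonnegative, so 0 is a neutral start). *)
Definition fmax (R : realType) (n : nat) (x : 'I_n -> R) : R :=
  \big[Num.max/0]_(e < n) x e.

(* An online (randomized) single-choice algorithm is given by decision rules
   dec i s x : "accept element i if it is still possible", where s is the
   algorithm's random seed and x the vector of weights; the rule may only
   look at x_0, ..., x_i (online constraint, see [online]).  The algorithm
   selects the first element i whose rule says accept (after that nothing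
   more can be accepted, by feasibility). *)
Definition online (R : realType) (n : nat) (S : Type)
  (dec : 'I_n -> S -> ('I_n -> R) -> bool) : Prop :=
  forall (i : 'I_n) (s : S) (x y : 'I_n -> R),
    (forall j : 'I_n, (j <= i)%N -> x j = y j) -> dec i s x = dec i s y.

Definition chosen (R : realType) (n : nat) (S : Type)
  (dec : 'I_n -> S -> ('I_n -> R) -> bool) (s : S) (x : 'I_n -> R)
  : option 'I_n :=
  [pick i : 'I_n | dec i s x && [forall j : 'I_n, (j < i)%N ==> ~~ dec j s x]].

Definition alg_value (R : realType) (n : nat) (S : Type)
  (dec : 'I_n -> S -> ('I_n -> R) -> bool) (s : S) (x : 'I_n -> R) : R :=
  match chosen dec s x with Some i => x i | None => 0 end.

(* w(ALG(w)) / f(w), with the convention 0/0 = 1 (ALG is optimal when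
   f(w) = 0). *)
Definition ratio (R : realType) (n : nat) (x : 'I_n -> R) (v : R) : R :=
  if fmax x == 0 then 1 else v / fmax x.

(* (T, P, w) realizes a product distribution D = x_e D_e of nonnegative
   weights: the w_e are measurable, nonnegative and mutually independent. *)
Definition product_weights (R : realType) (n : nat) d (T : measurableType d)
  (P : probability T R) (w : 'I_n -> T -> R) : Prop :=
  (forall e, measurable_fun setT (w e)) /\
  (forall e t, 0 <= w e t) /\
  (forall B : 'I_n -> set R, (forall e, measurable (B e)) ->
     fine (P [set t | forall e, B e (w e t)]) =
     \prod_(e < n) fine (P (w e @^-1` B e))).

(* Admissible randomized online algorithms for the weights w: a seed space
   (S, Q) independent of the weights, online decision rules, measurable. *)
Definition admissible_alg (R : realType) (n : nat) d (T : measurableType d)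
  (w : 'I_n -> T -> R) d' (S : measurableType d')
  (dec : 'I_n -> S -> ('I_n -> R) -> bool) : Prop :=
  online dec /\
  (forall i : 'I_n, measurable [set z : S * T | dec i z.1 (fun j => w j z.2)]).

Definition EoR_D (R : realType) (n : nat) d (T : measurableType d)
  (P : probability T R) (w : 'I_n -> T -> R) : \bar R :=
  ereal_sup [set v : \bar R | exists d' (S : measurableType d')
     (Q : probability S R) (dec : 'I_n -> S -> ('I_n -> R) -> bool),
     admissible_alg w dec /\
     v = (\int[Q \x P]_z
            (ratio (fun j => w j z.2)
                   (alg_value dec z.1 (fun j => w j z.2)))%:E)%E].

Definition PbM_D (R : realType) (n : nat) d (T : measurableType d)
  (P : probability T R) (w : 'I_n -> T -> R) : \bar R :=
  ereal_sup [set v : \bar R | exists d' (S : measurableType d')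
     (Q : probability S R) (dec : 'I_n -> S -> ('I_n -> R) -> bool),
     admissible_alg w dec /\
     v = ((Q \x P) [set z | alg_value dec z.1 (fun j => w j z.2)
                           = fmax (fun j => w j z.2)])%E].

Definition EoR_single (R : realType) (n : nat) : \bar R :=
  ereal_inf [set v : \bar R | exists d (T : measurableType d)
     (P : probability T R) (w : 'I_n -> T -> R),
     product_weights P w /\ v = EoR_D P w].

Definition PbM_single (R : realType) (n : nat) : \bar R :=
  ereal_inf [set v : \bar R | exists d (T : measurableType d)
     (P : probability T R) (w : 'I_n -> T -> R),
     product_weights P w /\ v = PbM_D P w].

From Pilot Require Import Defs.
From HB Require Import structures.
From mathcomp Require Import all_boot all_order all_algebra.
From mathcomp Require Import all_classical all_reals all_analysis.
From mathcomp Require Import measurable_realfun lra.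
Set Implicit Arguments. Unset Strict Implicit. Unset Printing Implicit Defensive.
Import Order.TTheory GRing.Theory Num.Theory.
Local Open Scope classical_set_scope.
Local Open Scope ring_scope.

(* Succeeding on an event of probability p yields ratio 1 on that event, so
   PbM <= EoR for every distribution D.  Conversely, replace every weight w_e
   by exp(c w_e): this is again a product distribution, and an online
   algorithm for the new weights is an online algorithm for the old ones that
   selects the same element.  On the new weights its ratio is at most 1 when
   it selects the maximum, and at most exp(-c δ) when it selects an element
   lighter than the maximum by at least δ; the remaining event, two weights at
   distance in (0, δ), has probability tending to 0 with δ.  Choosing δ small
   and then c large gives EoR(D') <= PbM(D) + ε. *)

Section maximum.
Variables (R : realType) (n : nat).
Implicit Types (x : 'I_n -> R) (v δ : R).

Lemma fmax_ge0 x : 0 <= fmax x.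
Proof. exact: bigmax_ge_id. Qed.

Lemma le_fmax x j : x j <= fmax x.
Proof. exact: le_bigmax. Qed.

Lemma fmax_attained x (j : 'I_n) : (forall i, 0 <= x i) -> exists i, fmax x = x i.
Proof.
move=> x_ge0; have [i _ fx] := @eq_bigmax _ _ _ 0 j xpredT x isT (fun i _ => x_ge0 i).
by exists i.
Qed.

(* [ratio] alone would be the type of fractions from [fraction.v]. *)
Lemma ratio_ge0 x v : 0 <= v -> 0 <= Defs.ratio x v.
Proof.
by move=> v_ge0; rewrite /Defs.ratio; case: ifP => // _; rewrite divr_ge0 ?fmax_ge0.
Qed.

Lemma ratio_le1 x v : v <= fmax x -> Defs.ratio x v <= 1.
Proof.
rewrite /Defs.ratio; case: ifPn => // fx_neq0 v_le.
have fx_gt0 : 0 < fmax x by rewrite lt0r fx_neq0 fmax_ge0.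
by rewrite ler_pdivrMr // mul1r.
Qed.

Lemma ratio_fmax x : Defs.ratio x (fmax x) = 1.
Proof. by rewrite /Defs.ratio; case: ifPn => // /divff. Qed.

(* Exact ties are excluded: selecting either of two equal maxima is a success. *)
Definition near_tie x δ : Prop := exists a b : 'I_n, 0 < x b - x a < δ.

Lemma near_tie_le x δ δ' : δ <= δ' -> near_tie x δ -> near_tie x δ'.
Proof.
move=> le_δ [a [b /andP[gap_gt0 gap_lt]]]; exists a, b.
by rewrite gap_gt0 (lt_le_trans gap_lt le_δ).
Qed.

Lemma not_near_tie_inv x : exists m : nat, ~ near_tie x m.+1%:R^-1.
Proof.
pose g (p : 'I_n * 'I_n) := Num.truncn (x p.2 - x p.1)^-1.
exists (\max_p g p)%N => -[a [b /andP[gap_gt0 gap_lt]]].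
have inv_gap_lt : (x b - x a)^-1 < (\max_p g p)%N.+1%:R.
  apply: lt_le_trans (truncnS_gt _) _; rewrite ler_nat ltnS.
  exact: (leq_bigmax (a, b)).
move: gap_lt; rewrite -[x b - x a]invrK ltf_pV2 ?posrE ?invr_gt0 //; lra.
Qed.

Lemma ratio_expR_le c δ x (k : option 'I_n) : 0 <= c -> (forall j, 0 <= x j) ->
  Defs.ratio (fun j => expR (c * x j)) (if k is Some i then expR (c * x i) else 0) <=
  `[< (if k is Some i then x i else 0) = fmax x >]%:R + `[< near_tie x δ >]%:R
  + expR (- (c * δ)).
Proof.
move=> c_ge0 x_ge0; set y := fun j => expR (c * x j).
have tie_ge0 : 0 <= `[< near_tie x δ >]%:R :> R := ler0n _ _.
have exp_ge0 : 0 <= expR (- (c * δ)) := expR_ge0 _.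
have [fy0|fy_neq0] := eqVneq (fmax y) 0.
  have no_index (j : 'I_n) : False.
    by have := lt_le_trans (expR_gt0 (c * x j)) (le_fmax y j); rewrite fy0 ltxx.
  have fx0 : 0 = fmax x by symmetry; apply: bigmax_eq_id => j; case: (no_index j).
  case: k => [j|]; first by case: (no_index j).
  by rewrite /Defs.ratio fy0 eqxx (asboolT fx0) /=; clear no_index; lra.
rewrite /Defs.ratio (negbTE fy_neq0).
have fy_gt0 : 0 < fmax y by rewrite lt0r fy_neq0 fmax_ge0.
case: k => [i|]; last by rewrite mul0r; have := ler0n R `[< 0 = fmax x >]; lra.
have opt_ge0 : 0 <= `[< x i = fmax x >]%:R :> R := ler0n _ _.
have share_le1 : expR (c * x i) / fmax y <= 1 by rewrite ler_pdivrMr ?mul1r ?le_fmax.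
have [xi_max|xi_not_max] := pselect (x i = fmax x).
  by rewrite (asboolT xi_max) /=; lra.
have [b xb] := fmax_attained i x_ge0.
have xi_lt_xb : x i < x b by rewrite -xb lt_neqAle le_fmax andbT; apply/eqP.
have [close|far] := ltP (x b - x i) δ.
  rewrite (asboolT (_ : near_tie x δ)) /=; first lra.
  by exists i, b; rewrite subr_gt0 xi_lt_xb.
suff : expR (c * x i) / fmax y <= expR (- (c * δ)) by lra.
rewrite ler_pdivrMr //; apply: le_trans (ler_wpM2l exp_ge0 (le_fmax y b)).
by rewrite /y -expRD ler_expR; nra.
Qed.

End maximum.

Section online_choice.
Variables (R : realType) (n : nat) (S : Type) (dec : 'I_n -> S -> ('I_n -> R) -> bool).

Lemma chosen_SomeP s x i :
  chosen dec s x = Some i <-> dec i s x /\ forall j : 'I_n, (j < i)%N -> ~~ dec j s x.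
Proof.
rewrite /chosen; case: pickP => [k /andP[dec_k /forallP before_k] | none].
- split; first by case=> <-; split => // j; exact: (implyP (before_k j)).
  case=> dec_i before_i; congr Some.
  case: (ltngtP k i) => [ki|ik|/val_inj //].
  + by move: (before_i k ki); rewrite dec_k.
  + by move: (implyP (before_k i) ik); rewrite dec_i.
- split=> // -[dec_i before_i]; move: (none i); rewrite dec_i /=.
  by move/negbT/negP; case; apply/forallP => j; apply/implyP; exact: before_i.
Qed.

Lemma alg_value_ge0 s x : (forall j, 0 <= x j) -> 0 <= alg_value dec s x.
Proof. by move=> x_ge0; rewrite /alg_value; case: chosen. Qed.

Lemma alg_value_sum s x :
  alg_value dec s x = \sum_i (chosen dec s x == Some i)%:R * x i.
Proof.
rewrite /alg_value; case: chosen => [k|]; last by rewrite big1 // => i _; rewrite mul0r.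
rewrite (bigD1 k) //= eqxx mul1r big1 ?addr0 // => i ik.
by rewrite (inj_eq (@Some_inj _)) eq_sym (negbTE ik) mul0r.
Qed.

End online_choice.

Section measurability.
Variable R : realType.

Lemma measurable_eqr d (Z : measurableType d) (f g : Z -> R) :
  measurable_fun setT f -> measurable_fun setT g -> measurable [set z | f z = g z].
Proof.
move=> mf mg; have := measurable_fun_eqr mf mg measurableT (I : measurable [set true]).
by rewrite setTI; congr measurable; apply/seteqP; split => z /= /eqP.
Qed.

Lemma measurable_fmax n d (Z : measurableType d) (X : 'I_n -> Z -> R) :
  (forall e, measurable_fun setT (X e)) ->
  measurable_fun setT (fun z => fmax (fun j => X j z)).
Proof.
move=> mX; rewrite /fmax; elim: (index_enum _) => [|e r ih].
  by under eq_fun do rewrite big_nil; exact: measurable_cst.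
by under eq_fun do rewrite big_cons; exact: measurable_maxr.
Qed.

Variables (n : nat) (dT dS : measure_display) (T : measurableType dT) (S : measurableType dS).
Variables (X : 'I_n -> T -> R) (dec : 'I_n -> S -> ('I_n -> R) -> bool).
Hypothesis mX : forall e, measurable_fun setT (X e).
Hypothesis mdec : forall i, measurable [set z : S * T | dec i z.1 (fun j => X j z.2)].

Lemma measurable_chosen i :
  measurable [set z : S * T | chosen dec z.1 (fun j => X j z.2) = Some i].
Proof.
have -> : [set z : S * T | chosen dec z.1 (fun j => X j z.2) = Some i] =
    [set z | dec i z.1 (fun j => X j z.2)] `&`
    \bigcap_(k in [set k : 'I_n | (k < i)%N]) ~` [set z | dec k z.1 (fun j => X j z.2)].
  apply/seteqP; split => z; rewrite /= chosen_SomeP.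
  - by case=> dec_i before_i; split => // k /= ki; apply/negP/before_i.
  - by case=> dec_i before_i; split => // k ki; apply/negP; exact: (before_i k ki).
apply: measurableI => //; apply: fin_bigcap_measurable; first exact: finite_finset.
by move=> k _; apply: measurableC.
Qed.

Lemma measurable_alg_value :
  measurable_fun setT (fun z : S * T => alg_value dec z.1 (fun j => X j z.2)).
Proof.
under eq_fun do rewrite alg_value_sum; apply: measurable_sum => i.
apply: measurable_funM; last by apply: measurableT_comp => //; exact: measurable_snd.
have -> : (fun z : S * T => (chosen dec z.1 (fun j => X j z.2) == Some i)%:R) =
    \1_[set z | chosen dec z.1 (fun j => X j z.2) = Some i] :> (_ -> R).
  apply/funext => z; rewrite indicE; congr ((nat_of_bool _)%:R).
  by apply/idP/idP => [/eqP|/set_mem /= ->]; [exact: mem_set | rewrite eqxx].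
by apply: measurable_indic; exact: measurable_chosen.
Qed.

Lemma measurable_success : measurable [set z : S * T |
  alg_value dec z.1 (fun j => X j z.2) = fmax (fun j => X j z.2)].
Proof.
apply: measurable_eqr; first exact: measurable_alg_value.
by apply: measurable_fmax => e; apply: measurableT_comp => //; exact: measurable_snd.
Qed.

End measurability.

Section integrals.
Local Open Scope ereal_scope.
Variables (R : realType) (d : measure_display) (Z : measurableType d).

(* No measurability is needed: a nonnegative integral is the supremum of the
   integrals of its simple minorants. *)
Lemma ge0_le_integralT (mu : {measure set Z -> \bar R}) (f g : Z -> \bar R) :
  (forall z, 0 <= f z) -> (forall z, f z <= g z) ->
  \int[mu]_z f z <= \int[mu]_z g z.
Proof.
move=> f_ge0 fg; have g_ge0 z : 0 <= g z := le_trans (f_ge0 z) (fg z).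
rewrite !ge0_integralTE //; apply: ereal_sup_le.
by move=> _ [h hf <-]; exists h => //= z; exact: le_trans (hf z) (fg z).
Qed.

Lemma integral_indicD_cst (mu : probability Z R) (A B : set Z) (e : R) :
  measurable A -> measurable B -> (0 <= e)%R ->
  \int[mu]_z ((\1_A z)%:E + (\1_B z)%:E + e%:E) = mu A + mu B + e%:E.
Proof.
move=> mA mB e_ge0.
have m_indic (U : set Z) : measurable U -> measurable_fun setT (fun z => (\1_U z : R)%:E).
  by move=> mU; apply/measurable_EFinP; exact: measurable_indic.
have indic_ge0 (U : set Z) z : 0 <= (\1_U z : R)%:E by rewrite lee_fin.
rewrite ge0_integralD //; last 2 first.
- by move=> z _; exact: adde_ge0.
- by apply: emeasurable_funD; exact: m_indic.
rewrite ge0_integralD //; [|exact: m_indic|exact: m_indic].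
rewrite !integral_indic // !setIT integral_cst //.
by rewrite [X in _ * X]probability_setT mule1.
Qed.

End integrals.

Lemma product_measure_snd (R : realType) (dS dT : measure_display)
    (S : measurableType dS) (T : measurableType dT)
    (Q : probability S R) (P : probability T R) (B : set T) :
  measurable B -> (Q \x P)%E (snd @^-1` B) = P B.
Proof.
move=> mB; have -> : snd @^-1` B = setT `*` B :> set (S * T).
  by apply/seteqP; split => z /=; [move=> Bz; split|case].
by rewrite product_measure1E // [X in (X * _)%E]probability_setT mul1e.
Qed.

Lemma nonincreasing_bigcap0_small (R : realType) d (T : measurableType d)
    (P : probability T R) (F : (set T)^nat) :
  (forall m, measurable (F m)) -> nonincreasing_seq F -> \bigcap_m F m = set0 ->
  forall e : R, 0 < e -> exists m, (P (F m) <= e%:E)%E.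
Proof.
move=> mF F_decr F_cap e e_gt0.
have F0_fin : (P (F 0%N) < +oo)%E := le_lt_trans (probability_le1 P (mF 0%N)) (ltey _).
have := nonincreasing_cvg_mu F0_fin mF _ F_decr; rewrite F_cap measure0.
move=> /(_ measurable0 [set y | (y < e%:E)%E]) [|m _ Fm]; first exact/nbhs_EFin/lt_nbhsl.
by exists m; apply/ltW/Fm => /=.
Qed.

Lemma expR_Ninv_le (R : realType) (e : R) : 0 < e -> expR (- e^-1) <= e.
Proof.
move=> e_gt0; rewrite expRN -[leRHS]invrK lef_pV2 ?posrE ?expR_gt0 ?invr_gt0 //.
by apply: le_trans (expR_ge1Dx _); rewrite lerDr.
Qed.

Section exponential_reweighting.
Variables (R : realType) (n : nat) (d : measure_display) (T : measurableType d).
Variables (P : probability T R) (w : 'I_n -> T -> R).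
Hypothesis w_prod : product_weights P w.

Lemma product_weights_comp (φ : R -> R) :
  measurable_fun setT φ -> (forall r, 0 <= φ r) ->
  product_weights P (fun e t => φ (w e t)).
Proof.
case: w_prod => w_meas [_ w_indep] φ_meas φ_ge0; split; [|split] => //.
- by move=> e; exact: measurableT_comp.
- move=> B B_meas; apply: (w_indep (fun e => φ @^-1` B e)) => e.
  by rewrite -[X in measurable X]setTI; exact: φ_meas.
Qed.

Lemma admissible_alg_comp (φ : R -> R) dS (S : measurableType dS)
    (dec : 'I_n -> S -> ('I_n -> R) -> bool) :
  admissible_alg (fun e t => φ (w e t)) dec ->
  admissible_alg w (fun i s x => dec i s (fun j => φ (x j))).
Proof.
case=> dec_online dec_meas; split => // i s x y xy.
by apply: dec_online => j ji; rewrite xy.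
Qed.

Lemma measurable_near_tie δ : measurable [set t | near_tie (fun j => w j t) δ].
Proof.
case: w_prod => w_meas _.
have -> : [set t | near_tie (fun j => w j t) δ] =
    \bigcup_(a in setT) \bigcup_(b in setT) ((fun t => w b t - w a t) @^-1` `]0, δ[).
  apply/seteqP; split => t /=.
  - by case=> a [b gap]; exists a => //; exists b => //=; rewrite in_itv.
  - by case=> a _ [b _] /=; rewrite in_itv /= => gap; exists a, b.
apply: fin_bigcup_measurable; first exact: finite_finset.
move=> a _; apply: fin_bigcup_measurable; first exact: finite_finset.
by move=> b _; rewrite -[X in measurable X]setTI; exact: measurable_funB.
Qed.

Lemma near_tie_small e : 0 < e ->
  exists2 δ, 0 < δ & (P [set t | near_tie (fun j => w j t) δ] <= e%:E)%E.
Proof.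
move=> e_gt0; pose F m := [set t | near_tie (fun j => w j t) m.+1%:R^-1].
have F_decr : nonincreasing_seq F.
  move=> m k mk; apply/subsetPset => t; apply: near_tie_le.
  by rewrite lef_pV2 ?posrE // ler_nat.
have F_cap : \bigcap_m F m = set0.
  apply/seteqP; split => // t Ft.
  by have [m not_tie] := not_near_tie_inv (fun j => w j t); exact: not_tie (Ft m I).
have F_meas m : measurable (F m) := measurable_near_tie _.
have [m Fm] := nonincreasing_bigcap0_small P F_meas F_decr F_cap e_gt0.
by exists m.+1%:R^-1; rewrite ?invr_gt0.
Qed.

Lemma PbM_D_le_EoR_D : (PbM_D P w <= EoR_D P w)%E.
Proof.
case: w_prod => w_meas [w_ge0 _].
apply: ge_ereal_sup => _ [d' [S [Q [dec [dec_adm ->]]]]].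
apply: ereal_sup_ge; eexists; first by exists d', S, Q, dec.
rewrite -[X in (_ X <= _)%E]setIT -integral_indic //.
  2: exact: measurable_success w_meas dec_adm.2.
apply: ge0_le_integralT => z; first by rewrite lee_fin.
rewrite lee_fin indicE; have [|_] := boolP (z \in _).
- by rewrite inE /= => ->; rewrite ratio_fmax.
- by apply/ratio_ge0/alg_value_ge0 => j; exact: w_ge0.
Qed.

Lemma EoR_D_expR_le c δ : 0 <= c ->
  (EoR_D P (fun e t => expR (c * w e t)) <=
   PbM_D P w + P [set t | near_tie (fun j => w j t) δ] + (expR (- (c * δ)))%:E)%E.
Proof.
case: w_prod => w_meas [w_ge0 _] c_ge0.
apply: ge_ereal_sup => _ [d' [S [Q [dec [dec_adm ->]]]]].
have sim_adm := admissible_alg_comp (φ := fun r => expR (c * r)) dec_adm.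
set sim := fun i s x => dec i s (fun j => expR (c * x j)) in sim_adm.
set Succ := [set z : S * T |
  alg_value sim z.1 (fun j => w j z.2) = fmax (fun j => w j z.2)].
have Succ_meas : measurable Succ := measurable_success w_meas sim_adm.2.
have Succ_le : ((Q \x P) Succ <= PbM_D P w)%E.
  by apply: ereal_sup_ubound; exists d', S, Q, sim.
set Tie := [set t | near_tie (fun j => w j t) δ].
have Tie_meas : measurable (snd @^-1` Tie : set (S * T)).
  rewrite -[X in measurable X]setTI.
  by apply: measurable_snd => //; exact: measurable_near_tie.
apply: (@le_trans _ _ (\int[Q \x P]_z
    ((\1_Succ z)%:E + (\1_(snd @^-1` Tie) z)%:E + (expR (- (c * δ)))%:E))%E).
  apply: ge0_le_integralT => z.
    by rewrite lee_fin ratio_ge0 // alg_value_ge0 // => j; exact: expR_ge0.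
  rewrite -!EFinD lee_fin !indicE.
  exact: (ratio_expR_le δ (chosen dec z.1 (fun j => expR (c * w j z.2))) c_ge0).
rewrite integral_indicD_cst ?expR_ge0 //; apply: leeD => //; apply: leeD => //.
rewrite le_eqVlt; apply/orP; left; apply/eqP.
exact: product_measure_snd (measurable_near_tie δ).
Qed.

End exponential_reweighting.

Lemma EoR_single_le_PbM_D (R : realType) (n : nat) d (T : measurableType d)
    (P : probability T R) (w : 'I_n -> T -> R) (e : R) :
  product_weights P w -> 0 < e -> (EoR_single R n <= PbM_D P w + e%:E)%E.
Proof.
move=> w_prod e_gt0; have e2_gt0 : 0 < e / 2 by rewrite divr_gt0.
have [δ δ_gt0 tie_small] := near_tie_small w_prod e2_gt0.
pose c := (e / 2 * δ)^-1.
have c_ge0 : 0 <= c by rewrite invr_ge0 mulr_ge0 ?ltW.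
have cδ : c * δ = (e / 2)^-1 by rewrite /c invfM -mulrA mulVf ?mulr1 ?gt_eqF.
apply: (@le_trans _ _ (EoR_D P (fun k t => expR (c * w k t)))).
  apply: ereal_inf_lbound; exists d, T, P, (fun k t => expR (c * w k t)); split => //.
  apply: (product_weights_comp w_prod (φ := fun r => expR (c * r))) => [|r].
    by apply: measurableT_comp => //; exact: measurable_funM.
  exact: expR_ge0.
apply: le_trans (EoR_D_expR_le w_prod δ c_ge0) _.
rewrite -addeA leeD // (splitr e) EFinD leeD // lee_fin cδ.
exact: expR_Ninv_le.
Qed.

Theorem proposition3 (R : realType) (n : nat) :
  EoR_single R n = PbM_single R n.
Proof.
apply/le_anti/andP; split; apply: le_ereal_inf_tmp => _ [d [T [P [w [w_prod ->]]]]].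
- by apply/lee_addgt0Pr => e e_gt0; exact: EoR_single_le_PbM_D.
- apply: le_trans (PbM_D_le_EoR_D w_prod); apply: ereal_inf_lbound.
  by exists d, T, P, w.
Qed.
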